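(* Fix a realization of the field $\{h_v\}$, $\beta>0$, $N=2^n$ with $n\ge10$, $\Delta>0$, $\Delta'\ge0$, a set $S\subset\Lambda_N$ with $\Lambda_{N/8}\subset S$, $\Gamma=\partial S$, and $\tau^+,\tau^-\in\{-1,1\}^\Gamma$ with $\tau^+\ge\tau^-$. Then for any nonempty increasing set $\Omega^+\subset\{-1,1\}^S$ and any nonempty decreasing set $\Omega^-\subset\{-1,1\}^S$, $$\Delta\int_0^1\big(m^{S,\tau^+,t}_{\Omega^+}-m^{S,\tau^-,t}_{\Omega^-}\big)\,dt\leq8\sum_{v\in\Gamma}(\tau^+_v-\tau^-_v)-\frac1\beta\Big(\log\mu^{S,\tau^+,0}(\Omega^+)+\log\mu^{S,\tau^-,1}(\Omega^-)\Big).$$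
   Context: Write $u\sim v$ if $|u-v|_1=1$; $\partial A=\{v\in\mathbb Z^2\setminus A:u\sim v\text{ for some }u\in A\}$; $\Lambda_r=\{v\in\mathbb Z^2:|v|_\infty\le r\}$. For $0\le t\le1$ define the field $h^{(t)}_v=h_v+\Delta'$ for $v\in\Lambda_N\setminus\Lambda_{N/8}$ and $h^{(t)}_v=h_v+t\Delta$ for $v\in\Lambda_{N/8}$. For $\tau\in\{-1,1\}^\Gamma$ and $\sigma\in\{-1,1\}^S$, $H^{S,\tau,t}(\sigma)=-\big(\sum_{u\sim v,\,u,v\in S}\sigma_u\sigma_v+\sum_{u\sim v,\,u\in S,v\in\Gamma}\sigma_u\tau_v+\sum_{u\in S}\sigma_uh^{(t)}_u\big)$ and $\mu^{S,\tau,t}(\sigma)\propto e^{-\beta H^{S,\tau,t}(\sigma)}$. For $\Omega\subset\{-1,1\}^S$ with $\mu^{S,\tau,t}(\Omega)>0$, $\mu^{S,\tau,t}_\Omega=\mu^{S,\tau,t}(\cdot\mid\Omega)$ and $m^{S,\tau,t}_\Omega=\sum_{v\in\Lambda_{N/32}}\langle\sigma_v\rangle_{\mu^{S,\tau,t}_\Omega}$. A set $\Omega\subset\{-1,1\}^S$ is increasing if $\sigma\in\Omega$ and $\sigma'\ge\sigma$ imply $\sigma'\in\Omega$; it is decreasing if its complement is increasing. *)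

From HB Require Import structures.
From mathcomp Require Import all_boot all_order all_algebra finmap.
From mathcomp Require Import all_classical all_reals all_analysis.
Set Implicit Arguments. Unset Strict Implicit. Unset Printing Implicit Defensive.
Import Order.TTheory GRing.Theory Num.Theory.
Local Open Scope fset_scope.
Local Open Scope ring_scope.

Definition pt := (int * int)%type.

Definition shift (u d : pt) : pt := (u.1 + d.1, u.2 + d.2).
(* the four unit vectors: v ~ u iff v = shift u d for some d in dirs *)
Definition dirs : seq pt := [:: (1, 0); (-1, 0); (0, 1); (0, -1)].
(* half of them: every unordered edge {u, v} is counted once as (u, shift u d) *)
Definition half_dirs : seq pt := [:: (1, 0); (0, 1)].

Definition inbox (r : nat) (v : pt) : bool := (`|v.1|%N <= r)%N && (`|v.2|%N <= r)%N.
Definition coords (r : nat) : seq int := [seq (i%:Z - r%:Z) | i <- iota 0 (r.*2.+1)].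
Definition box_seq (r : nat) : seq pt := [seq (x, y) | x <- coords r, y <- coords r].

Definition bdry (S : {fset pt}) : seq pt :=
  undup [seq v <- [seq shift u d | u <- enum_fset S, d <- dirs] | v \notin S].

Definition spin {R : realType} (b : bool) : R := if b then 1 else -1.

Definition config (S : {fset pt}) := {ffun S -> bool}.

(* sigma_v for v in Z^2 (0 if v is not in S; only used for v in S) *)
Definition sigma_at {R : realType} (S : {fset pt}) (s : config S) (v : pt) : R :=
  match insub v : option S with Some x => spin (s x) | None => 0 end.

Definition hfield {R : realType} (h : pt -> R) (N : nat) (Delta Delta' t : R) (v : pt) : R :=
  if inbox (N %/ 8) v then h v + t * Delta else h v + Delta'.

Definition ham {R : realType} (h : pt -> R) (N : nat) (Delta Delta' : R)
  (S : {fset pt}) (tau : pt -> bool) (t : R) (s : config S) : R :=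
  - ( \sum_(x : S) \sum_(d <- half_dirs)
        (if shift (val x) d \in S then spin (s x) * sigma_at s (shift (val x) d) else 0)
    + \sum_(x : S) \sum_(d <- dirs)
        (if shift (val x) d \notin S then spin (s x) * spin (tau (shift (val x) d)) else 0)
    + \sum_(x : S) spin (s x) * hfield h N Delta Delta' t (val x)).

Definition weight {R : realType} (beta : R) (h : pt -> R) (N : nat) (Delta Delta' : R)
  (S : {fset pt}) (tau : pt -> bool) (t : R) (s : config S) : R :=
  expR (- beta * ham h N Delta Delta' tau t s).

Definition mu {R : realType} (beta : R) (h : pt -> R) (N : nat) (Delta Delta' : R)
  (S : {fset pt}) (tau : pt -> bool) (t : R) (Om : pred (config S)) : R :=
  (\sum_(s : config S | Om s) weight beta h N Delta Delta' tau t s)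
  / (\sum_(s : config S) weight beta h N Delta Delta' tau t s).

Definition mag {R : realType} (beta : R) (h : pt -> R) (N : nat) (Delta Delta' : R)
  (S : {fset pt}) (tau : pt -> bool) (t : R) (Om : pred (config S)) : R :=
  \sum_(v <- box_seq (N %/ 32))
    ((\sum_(s : config S | Om s) sigma_at s v * weight beta h N Delta Delta' tau t s)
     / (\sum_(s : config S | Om s) weight beta h N Delta Delta' tau t s)).

Definition cle (S : {fset pt}) (s s' : config S) : bool := [forall x, s x ==> s' x].

Definition increasing (S : {fset pt}) (Om : pred (config S)) : Prop :=
  forall s s' : config S, Om s -> cle s s' -> Om s'.
Definition decreasing (S : {fset pt}) (Om : pred (config S)) : Prop :=
  increasing (predC Om).

(* The Hamiltonian is submodular: H^{tau+}(a v b) + H^{tau-}(a ^ b)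
   <= H^{tau+}(a) + H^{tau-}(b), the boundary term using tau+ >= tau-. Restricted to an increasing
   Omega+ and a decreasing Omega-, the Gibbs weights therefore satisfy the hypothesis of the
   Ahlswede-Daykin four functions theorem, which gives Holley's inequality
   <sigma_v>^{tau-,t}_{Omega-} <= <sigma_v>^{tau+,t}_{Omega+} at every site v.
   Since h^(t) is affine in t on Lambda_{N/8}, d/dt log Z^{tau,t}_Omega is beta Delta times the sum of
   these means over Lambda_{N/8}; the mean differences being nonnegative, the magnetisation gap over
   Lambda_{N/32} is at most (beta Delta)^{-1} d/dt (log Z^+ - log Z^-), and integrating over [0, 1]
   bounds the left-hand side by beta^{-1} times the increment of log Z^+ - log Z^-. Finally
   Z_Omega <= Z, and changing tau- into tau+ changes every energy by at most 4 sum_v (tau+_v - tau-_v),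
   which turns that increment into the right-hand side. *)

From HB Require Import structures.
From mathcomp Require Import all_boot all_order all_algebra finmap.
From mathcomp Require Import all_classical all_reals all_analysis.
From mathcomp Require Import ring lra zify.
Import Order.TTheory GRing.Theory Num.Theory numFieldNormedType.Exports.
Set Implicit Arguments. Unset Strict Implicit. Unset Printing Implicit Defensive.
Local Open Scope ring_scope.

Section FourFunctions.
Variables (R : realFieldType) (I : finType).
Local Notation cube := {ffun I -> bool}.

Definition fjoin (a b : cube) : cube := [ffun i => a i || b i].
Definition fmeet (a b : cube) : cube := [ffun i => a i && b i].

Definition ad_condition (al be ga de : cube -> R) :=
  forall a b, al a * be b <= ga (fjoin a b) * de (fmeet a b).

Lemma four_functions_base (a0 a1 b0 b1 c0 c1 d0 d1 : R) :
  0 <= a0 -> 0 <= a1 -> 0 <= b0 -> 0 <= b1 -> 0 <= c0 -> 0 <= c1 -> 0 <= d0 -> 0 <= d1 ->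
  a0 * b0 <= c0 * d0 -> a0 * b1 <= c1 * d0 -> a1 * b0 <= c1 * d0 -> a1 * b1 <= c1 * d1 ->
  (a0 + a1) * (b0 + b1) <= (c0 + c1) * (d0 + d1).
Proof.
move=> a0_ge0 a1_ge0 b0_ge0 b1_ge0 c0_ge0 c1_ge0 d0_ge0 d1_ge0 h00 h01 h10 h11.
have [c1d0_eq0|c1d0_neq0] := eqVneq (c1 * d0) 0.
  have a0b1_eq0 : a0 * b1 = 0 by apply/le_anti; rewrite mulr_ge0 // andbT -c1d0_eq0.
  have a1b0_eq0 : a1 * b0 = 0 by apply/le_anti; rewrite mulr_ge0 // andbT -c1d0_eq0.
  have : 0 <= c0 * d1 by rewrite mulr_ge0.
  nra.
have c1d0_gt0 : 0 < c1 * d0 by rewrite lt_def c1d0_neq0 mulr_ge0.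
(* p + q <= r + u follows from p, q <= r and p q <= r u,
   for p = a0 b1, q = a1 b0, r = c1 d0 and u = c0 d1 *)
have pq_le : (a0 * b1) * (a1 * b0) <= (c1 * d0) * (c0 * d1).
  have -> : (a0 * b1) * (a1 * b0) = (a0 * b0) * (a1 * b1) by ring.
  have -> : (c1 * d0) * (c0 * d1) = (c0 * d0) * (c1 * d1) by ring.
  by apply: ler_pM; rewrite ?mulr_ge0.
have r_sub_pq : 0 <= (c1 * d0 - a0 * b1) * (c1 * d0 - a1 * b0).
  by apply: mulr_ge0; rewrite subr_ge0.
rewrite -(ler_pM2l c1d0_gt0); nra.
Qed.

Definition ffun_upd (x : cube) (i : I) (c : bool) : cube :=
  [ffun j => if j == i then c else x j].

Lemma fjoin_upd a b i c d :
  fjoin (ffun_upd a i c) (ffun_upd b i d) = ffun_upd (fjoin a b) i (c || d).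
Proof. by apply/ffunP => j; rewrite !ffunE; case: (j == i); rewrite ?ffunE. Qed.

Lemma fmeet_upd a b i c d :
  fmeet (ffun_upd a i c) (ffun_upd b i d) = ffun_upd (fmeet a b) i (c && d).
Proof. by apply/ffunP => j; rewrite !ffunE; case: (j == i); rewrite ?ffunE. Qed.

Definition marginal (i : I) (g : cube -> R) (x : cube) : R :=
  g (ffun_upd x i false) + g (ffun_upd x i true).

Fixpoint marginals (l : seq I) (g : cube -> R) : cube -> R :=
  if l is i :: l' then marginal i (marginals l' g) else g.

Lemma marginals_ge0 l g : (forall x, 0 <= g x) -> forall x, 0 <= marginals l g x.
Proof. by elim: l => //= i l IH g_ge0 x; rewrite /marginal addr_ge0 ?IH. Qed.

Lemma ad_condition_marginal i al be ga de :
  (forall x, 0 <= al x) -> (forall x, 0 <= be x) ->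
  (forall x, 0 <= ga x) -> (forall x, 0 <= de x) ->
  ad_condition al be ga de ->
  ad_condition (marginal i al) (marginal i be) (marginal i ga) (marginal i de).
Proof.
move=> al_ge0 be_ge0 ga_ge0 de_ge0 ad a b.
have ad_upd c d : al (ffun_upd a i c) * be (ffun_upd b i d) <=
    ga (ffun_upd (fjoin a b) i (c || d)) * de (ffun_upd (fmeet a b) i (c && d)).
  by rewrite -fjoin_upd -fmeet_upd.
by apply: four_functions_base => //; exact: ad_upd.
Qed.

Lemma ad_condition_marginals l al be ga de :
  (forall x, 0 <= al x) -> (forall x, 0 <= be x) ->
  (forall x, 0 <= ga x) -> (forall x, 0 <= de x) ->
  ad_condition al be ga de ->
  ad_condition (marginals l al) (marginals l be) (marginals l ga) (marginals l de).
Proof.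
move=> al_ge0 be_ge0 ga_ge0 de_ge0 ad; elim: l => //= i l IH.
by apply: ad_condition_marginal IH; apply: marginals_ge0.
Qed.

Lemma marginals_eq l g (x y : cube) :
  (forall j, j \notin l -> x j = y j) -> marginals l g x = marginals l g y.
Proof.
elim: l x y => [|i l IH] x y /= xy.
  by congr g; apply/ffunP => j; apply: xy.
rewrite /marginal; congr (_ + _); apply: IH => j jl; rewrite !ffunE;
  by case: eqP => // /eqP ji; apply: xy; rewrite in_cons negb_or ji jl.
Qed.

Lemma sum_marginal i g : \sum_x marginal i g x = 2 * \sum_x g x.
Proof.
pose flip (x : cube) := ffun_upd x i (~~ x i).
have flipK : involutive flip.
  by move=> x; apply/ffunP => j; rewrite !ffunE; case: eqP => // ->; rewrite eqxx negbK.
have upd_id c (x : cube) : x i = c -> ffun_upd x i c = x.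
  by move=> <-; apply/ffunP => j; rewrite ffunE; case: eqP => // ->.
have -> : \sum_x marginal i g x = \sum_x (g x + g (flip x)).
  apply: eq_bigr => x _; rewrite /marginal /flip.
  by case xi: (x i); rewrite (upd_id _ _ xi) // addrC.
have sum_flip : \sum_x g (flip x) = \sum_x g x.
  by rewrite [RHS](reindex_inj (inv_inj flipK)).
by rewrite big_split /= sum_flip -mulr2n mulr_natl.
Qed.

Lemma sum_marginals l g : \sum_x marginals l g x = 2 ^+ size l * \sum_x g x.
Proof.
by elim: l => [|i l IH] /=; rewrite ?expr0 ?mul1r // sum_marginal IH exprS mulrA.
Qed.

(* Marginalising over every coordinate yields constant functions, to which the
   condition at a single point applies. *)
Theorem four_functions al be ga de :
  (forall x, 0 <= al x) -> (forall x, 0 <= be x) ->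
  (forall x, 0 <= ga x) -> (forall x, 0 <= de x) ->
  ad_condition al be ga de ->
  (\sum_x al x) * (\sum_x be x) <= (\sum_x ga x) * (\sum_x de x).
Proof.
move=> al_ge0 be_ge0 ga_ge0 de_ge0 ad.
pose l := enum I; pose x0 : cube := [ffun=> false]; pose K := \sum_(x : cube) (1 : R).
have sum_const g : \sum_x marginals l g x = K * marginals l g x0.
  rewrite mulr_suml; apply: eq_bigr => x _; rewrite mul1r.
  by apply: marginals_eq => j; rewrite mem_enum.
have x0_lattice : fjoin x0 x0 = x0 /\ fmeet x0 x0 = x0.
  by split; apply/ffunP => j; rewrite !ffunE.
have := ad_condition_marginals l al_ge0 be_ge0 ga_ge0 de_ge0 ad x0 x0.
case: x0_lattice => -> -> ad0.
have pow_gt0 : 0 < (2 : R) ^+ size l * 2 ^+ size l by rewrite mulr_gt0 ?exprn_gt0.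
rewrite -(ler_pM2l pow_gt0) mulrACA -!sum_marginals mulrACA -!sum_marginals !sum_const.
by rewrite mulrACA [X in _ <= X]mulrACA ler_wpM2l ?mulr_ge0 ?sumr_ge0.
Qed.

End FourFunctions.

Lemma holley_spin_mean (R : realType) (I : finType) (m1 m2 : {ffun I -> bool} -> R) (i : I) :
  (forall x, 0 <= m1 x) -> (forall x, 0 <= m2 x) ->
  0 < \sum_s m1 s -> 0 < \sum_s m2 s ->
  ad_condition m2 m1 m2 m1 ->
  (\sum_(s : {ffun I -> bool}) spin (s i) * m1 s) / (\sum_s m1 s) <=
  (\sum_(s : {ffun I -> bool}) spin (s i) * m2 s) / (\sum_s m2 s).
Proof.
move=> m1_ge0 m2_ge0 Z1_gt0 Z2_gt0 ad.
pose up (m : {ffun I -> bool} -> R) (s : {ffun I -> bool}) := if s i then m s else 0.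
pose down (m : {ffun I -> bool} -> R) (s : {ffun I -> bool}) := if s i then 0 else m s.
have up_ge0 m : (forall x, 0 <= m x) -> forall x, 0 <= up m x by rewrite /up => ? x; case: ifP.
have down_ge0 m : (forall x, 0 <= m x) -> forall x, 0 <= down m x by rewrite /down => ? x; case: ifP.
have sum_spin m : \sum_(s : {ffun I -> bool}) spin (s i) * m s = \sum_s up m s - \sum_s down m s.
  by rewrite -sumrB; apply: eq_bigr => s _; rewrite /up /down /spin; case: (s i); ring.
have sum_split m : \sum_s m s = \sum_s up m s + \sum_s down m s.
  by rewrite -big_split /=; apply: eq_bigr => s _; rewrite /up /down; case: (s i); ring.
(* the only pairs contributing to the left are those with [a i = false] and [b i = true] *)
have ad_split : ad_condition (down m2) (up m1) (up m2) (down m1).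
  move=> a b; rewrite /up /down /fjoin /fmeet !ffunE.
  case: (a i); case: (b i) => /=; rewrite ?mul0r ?mulr0 ?mulr_ge0 //; exact: ad.
have := four_functions (down_ge0 _ m2_ge0) (up_ge0 _ m1_ge0) (up_ge0 _ m2_ge0)
  (down_ge0 _ m1_ge0) ad_split.
move: Z1_gt0 Z2_gt0; rewrite !sum_spin !(sum_split m1) !(sum_split m2) => Z1_gt0 Z2_gt0 ad_sum.
by rewrite ler_pdivrMr // mulrAC ler_pdivlMr //; nra.
Qed.

Section Energy.
Context {R : realType}.
Implicit Types (S : {fset pt}) (tau : pt -> bool) (h : pt -> R) (N : nat) (beta Delta t : R).

Definition pair_energy S (s : config S) : R :=
  \sum_(x : S) \sum_(d <- half_dirs)
    (if shift (val x) d \in S then spin (s x) * sigma_at s (shift (val x) d) else 0).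

Definition bdry_energy S tau (s : config S) : R :=
  \sum_(x : S) \sum_(d <- dirs)
    (if shift (val x) d \notin S then spin (s x) * spin (tau (shift (val x) d)) else 0).

Definition field_energy h N Delta (Delta' : R) S t (s : config S) : R :=
  \sum_(x : S) spin (s x) * hfield h N Delta Delta' t (val x).

Lemma hamE h N Delta Delta' S tau t (s : config S) :
  ham h N Delta Delta' tau t s =
  - (pair_energy s + bdry_energy tau s + field_energy h N Delta Delta' t s).
Proof. by []. Qed.

Lemma spin_or_and_mul (p q r u : bool) :
  spin p * spin r + spin q * spin u <=
  spin (p || q) * spin (r || u) + spin (p && q) * spin (r && u) :> R.
Proof. by case: p; case: q; case: r; case: u; rewrite /spin /=; lra. Qed.

Lemma spin_or_and_mul_le (p q r u : bool) : u ==> r ->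
  spin p * spin r + spin q * spin u <= spin (p || q) * spin r + spin (p && q) * spin u :> R.
Proof. by case: p; case: q; case: r; case: u; rewrite /spin /= => //; lra. Qed.

Lemma spin_or_add_and (p q : bool) : spin (p || q) + spin (p && q) = spin p + spin q :> R.
Proof. by case: p; case: q; rewrite /spin /= addrC. Qed.

Lemma mem_bdry S (u d : pt) :
  u \in S -> d \in dirs -> shift u d \notin S -> shift u d \in bdry S.
Proof.
move=> uS d_dir uDS; rewrite /bdry mem_undup mem_filter uDS /=.
exact: (allpairs_f shift uS d_dir).
Qed.

Lemma pair_energy_join_meet S (a b : config S) :
  pair_energy a + pair_energy b <= pair_energy (fjoin a b) + pair_energy (fmeet a b).
Proof.
rewrite /pair_energy -!big_split /=; apply: ler_sum => x _.
rewrite -!big_split /=; apply: ler_sum => d _.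
case: ifP => _; last by rewrite addr0.
rewrite /sigma_at; case: insub => [y|]; last by rewrite !mulr0 addr0.
by rewrite !ffunE; apply: spin_or_and_mul.
Qed.

Lemma bdry_energy_join_meet S (taup taum : pt -> bool) (a b : config S) :
  (forall v, v \in bdry S -> taum v ==> taup v) ->
  bdry_energy taup a + bdry_energy taum b <=
  bdry_energy taup (fjoin a b) + bdry_energy taum (fmeet a b).
Proof.
move=> tau_le; rewrite /bdry_energy -!big_split /=; apply: ler_sum => x _.
rewrite -!big_split /= big_seq [X in _ <= X]big_seq; apply: ler_sum => d d_dir.
case: ifP => xdS; last by rewrite addr0.
by rewrite !ffunE; apply/spin_or_and_mul_le/tau_le/mem_bdry => //; apply: fsvalP.
Qed.

Lemma field_energy_join_meet h N Delta Delta' S t (a b : config S) :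
  field_energy h N Delta Delta' t (fjoin a b) + field_energy h N Delta Delta' t (fmeet a b) =
  field_energy h N Delta Delta' t a + field_energy h N Delta Delta' t b.
Proof.
rewrite /field_energy -!big_split /=; apply: eq_bigr => x _.
by rewrite !ffunE -!mulrDl spin_or_add_and.
Qed.

Lemma ham_join_meet h N Delta Delta' S (taup taum : pt -> bool) t (a b : config S) :
  (forall v, v \in bdry S -> taum v ==> taup v) ->
  ham h N Delta Delta' taup t (fjoin a b) + ham h N Delta Delta' taum t (fmeet a b) <=
  ham h N Delta Delta' taup t a + ham h N Delta Delta' taum t b.
Proof.
move=> tau_le; rewrite !hamE.
have := pair_energy_join_meet a b; have := bdry_energy_join_meet a b tau_le.
have := field_energy_join_meet h N Delta Delta' t a b.
lra.
Qed.

Lemma weight_ad_condition beta h N Delta Delta' S (taup taum : pt -> bool)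
    (Omp Omm : pred (config S)) t :
  0 < beta -> (forall v, v \in bdry S -> taum v ==> taup v) ->
  increasing Omp -> decreasing Omm ->
  let wp s := if Omp s then weight beta h N Delta Delta' taup t s else 0 in
  let wm s := if Omm s then weight beta h N Delta Delta' taum t s else 0 in
  ad_condition wp wm wp wm.
Proof.
move=> beta_gt0 tau_le Omp_up Omm_down wp wm a b; rewrite /wp /wm.
have w_ge0 tau s : 0 <= weight beta h N Delta Delta' tau t s by apply: expR_ge0.
case Omp_a: (Omp a); last by rewrite mul0r; case: ifP; case: ifP; rewrite ?mulr_ge0.
case Omm_b: (Omm b); last by rewrite mulr0; case: ifP; case: ifP; rewrite ?mulr_ge0.
have -> : Omp (fjoin a b).
  by apply: (Omp_up a) => //; apply/forallP => x; rewrite ffunE; case: (a x).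
have -> : Omm (fmeet a b).
  apply/contraT => nOmm_ab; suff : predC Omm b by rewrite /= Omm_b.
  by apply: (Omm_down (fmeet a b)) => //; apply/forallP => x; rewrite ffunE; case: (a x); case: (b x).
rewrite /weight -!expRD ler_expR.
have := ham_join_meet h N Delta Delta' t a b tau_le; nra.
Qed.

End Energy.

Lemma mem_coords (r : nat) (x : int) : (x \in coords r) = (`|x|%N <= r)%N.
Proof.
apply/mapP/idP => [[i]|x_le].
  by rewrite mem_iota add0n => /andP[_ i_lt] ->; lia.
by exists (absz (x + r%:Z)); rewrite ?mem_iota; lia.
Qed.

Lemma coords_uniq (r : nat) : uniq (coords r).
Proof. by rewrite map_inj_uniq ?iota_uniq // => i j /=; lia. Qed.

Lemma mem_box_seq (r : nat) (v : pt) : (v \in box_seq r) = inbox r v.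
Proof.
case: v => a b; apply/allpairsP/idP => [[[x y]] /= [xr yr [-> ->]]|].
  by rewrite /inbox /= -!mem_coords xr yr.
by rewrite /inbox /= -!mem_coords => /andP[ar br]; exists (a, b).
Qed.

Lemma box_seq_uniq (r : nat) : uniq (box_seq r).
Proof. by apply: allpairs_uniq; rewrite ?coords_uniq // => -[x y] [x' y'] _ _ [-> ->]. Qed.

Lemma inbox_le (r r' : nat) (v : pt) : (r <= r')%N -> inbox r v -> inbox r' v.
Proof. by move=> rr' /andP[a b]; rewrite /inbox (leq_trans a rr') (leq_trans b rr'). Qed.

Lemma big_box_seq (R : nmodType) (S : {fset pt}) (r : nat) (F : pt -> R) :
  (forall v, inbox r v -> v \in S) ->
  \sum_(v <- box_seq r) F v = \sum_(x : S | inbox r (val x)) F (val x).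
Proof.
move=> box_sub; rewrite -big_seq_fsetE /= -[RHS]big_filter.
apply/perm_big/uniq_perm; rewrite ?box_seq_uniq ?filter_uniq ?fset_uniq // => v.
by rewrite mem_box_seq mem_filter; case: (boolP (inbox r v)) => //= /box_sub.
Qed.

Lemma ler_sum_subset_uniq (R : numDomainType) (T : eqType) (s s' : seq T) (F : T -> R) :
  uniq s -> uniq s' -> {subset s <= s'} -> (forall v, v \in s' -> 0 <= F v) ->
  \sum_(v <- s) F v <= \sum_(v <- s') F v.
Proof.
move=> s_uniq s'_uniq ss' F_ge0; rewrite [X in _ <= X](bigID (mem s)) /=.
have -> : \sum_(v <- s' | v \in s) F v = \sum_(v <- s) F v.
  rewrite -big_filter; apply/perm_big/uniq_perm; rewrite ?filter_uniq // => v.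
  by rewrite mem_filter andb_idr //; apply: ss'.
by rewrite lerDl big_seq_cond sumr_ge0 // => v /andP[/F_ge0].
Qed.

Lemma shift_inj (d : pt) : injective (shift^~ d).
Proof. by move=> [a b] [a' b'] [] /addIr -> /addIr ->. Qed.

(* each direction maps the sites of [S] with an outside neighbour injectively into [bdry S] *)
Lemma sum_outward_le_bdry (R : numDomainType) (S : {fset pt}) (g : pt -> R) :
  (forall v, v \in bdry S -> 0 <= g v) ->
  \sum_(x : S) \sum_(d <- dirs) (if shift (val x) d \notin S then g (shift (val x) d) else 0)
  <= 4 * \sum_(v <- bdry S) g v.
Proof.
move=> g_ge0; rewrite exchange_big /=.
have -> : 4 * \sum_(v <- bdry S) g v = \sum_(d <- dirs) \sum_(v <- bdry S) g v.
  by rewrite /dirs !big_cons big_nil; ring.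
rewrite big_seq [X in _ <= X]big_seq; apply: ler_sum => d d_dir.
rewrite -big_mkcond /= -(big_seq_fsetE _ _ (fun u => shift u d \notin S) (fun u => g (shift u d))).
rewrite -big_filter -(big_map (shift^~ d) xpredT g) /=.
apply: ler_sum_subset_uniq => //; rewrite ?undup_uniq //.
  by rewrite (map_inj_uniq (@shift_inj d)) filter_uniq ?fset_uniq.
by move=> v /mapP[u]; rewrite mem_filter => /andP[uDS uS] ->; apply: mem_bdry.
Qed.

Lemma bdry_energy_diff (R : realType) (S : {fset pt}) (taup taum : pt -> bool) (s : config S) :
  (forall v, v \in bdry S -> taum v ==> taup v) ->
  `|bdry_energy taup s - bdry_energy taum s| <=
  4 * \sum_(v <- bdry S) (spin (taup v) - spin (taum v)) :> R.
Proof.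
move=> tau_le.
have spin_gap_ge0 v : v \in bdry S -> 0 <= spin (taup v) - spin (taum v) :> R.
  by move/tau_le; case: (taup v); case: (taum v); rewrite /spin //=; lra.
apply: le_trans (sum_outward_le_bdry spin_gap_ge0).
rewrite /bdry_energy -sumrB; apply: le_trans (ler_norm_sum _ _ _) _; apply: ler_sum => x _.
rewrite -sumrB; apply: le_trans (ler_norm_sum _ _ _) _.
rewrite big_seq [X in _ <= X]big_seq; apply: ler_sum => d d_dir.
case: ifP => xdS; last by rewrite subrr normr0.
have := tau_le _ (mem_bdry (fsvalP x) d_dir xdS).
by case: (s x); case: (taup _); case: (taum _); rewrite /spin /= => // _;
  rewrite ler_norml; apply/andP; split; lra.
Qed.

Lemma weight_bdry_le (R : realType) (beta : R) h N Delta Delta' (S : {fset pt})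
    (taup taum : pt -> bool) t (s : config S) :
  0 < beta -> (forall v, v \in bdry S -> taum v ==> taup v) ->
  let c := expR (4 * beta * \sum_(v <- bdry S) (spin (taup v) - spin (taum v))) in
  weight beta h N Delta Delta' taup t s <= weight beta h N Delta Delta' taum t s * c /\
  weight beta h N Delta Delta' taum t s <= weight beta h N Delta Delta' taup t s * c.
Proof.
move=> beta_gt0 tau_le c; have := bdry_energy_diff R s tau_le; rewrite ler_norml => /andP[lo hi].
by rewrite /c /weight -!expRD !ler_expR !hamE; split; nra.
Qed.

Lemma is_derive_sum_seq (R : realType) (I : Type) (r : seq I) (P : pred I)
    (F : I -> R -> R) (dF : I -> R) (x : R) :
  (forall i, P i -> is_derive x 1 (F i) (dF i)) ->
  is_derive x 1 (fun t => \sum_(i <- r | P i) F i t) (\sum_(i <- r | P i) dF i).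
Proof.
move=> F_dF; rewrite -fct_sumE.
by elim/big_ind2: _ => // [|f df g dg]; [exact: is_derive_cst | exact: is_deriveD].
Qed.

Lemma derivable_sum_seq (R : realType) (I : Type) (r : seq I) (P : pred I)
    (F : I -> R -> R) (x : R) :
  (forall i, P i -> derivable (F i) x 1) ->
  derivable (fun t => \sum_(i <- r | P i) F i t) x 1.
Proof.
move=> dF; suff : is_derive x 1 (fun t => \sum_(i <- r | P i) F i t) (\sum_(i <- r | P i) 'D_1 (F i) x).
  by case.
by apply: is_derive_sum_seq => i /dF/derivableP.
Qed.

Lemma derivable_continuous (R : realType) (f : R -> R) :
  (forall t, derivable f t 1) -> continuous f.
Proof. by move=> df t; apply/differentiable_continuous/derivable1_diffP. Qed.

Lemma integral01_le_increment (R : realType) (f g F : R -> R) :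
  continuous f -> continuous g -> (forall t, f t <= g t) ->
  (forall t : R, is_derive t (1 : R) F (g t)) ->
  (\int[@lebesgue_measure R]_(x in `[0%R, 1%R]) (f x)%:E <= (F 1 - F 0)%:E)%E.
Proof.
move=> cf cg fg dF.
have integrable01 (u : R -> R) : continuous u ->
    (@lebesgue_measure R).-integrable `[0%R, 1%R] (EFin \o u).
  move=> cu; apply: continuous_compact_integrable; first exact: segment_compact.
  exact: continuous_subspaceT.
apply: le_trans (_ : _ <= \int[@lebesgue_measure R]_(x in `[0%R, 1%R]) (g x)%:E)%E _.
  by apply: le_integral; rewrite ?integrable01 // => x _; rewrite lee_fin.
have cF : continuous F by apply: derivable_continuous => t; case: (dF t).
rewrite (@continuous_FTC2 R g F 0 1) ?ltr01 //.
- exact: continuous_subspaceT.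
- split; first by move=> t _; case: (dF t).
  + exact: cvg_at_right_filter (cF 0).
  + exact: cvg_at_left_filter (cF 1).
- by move=> t _; rewrite derive1E derive_val.
Qed.

Lemma ler_ln_mulexpR (R : realType) (x y c : R) :
  0 < x -> 0 < y -> x <= y * expR c -> ln x <= ln y + c.
Proof.
move=> x_gt0 y_gt0 x_le; have yc_gt0 : 0 < y * expR c by rewrite mulr_gt0 ?expR_gt0.
by rewrite -[c in _ + c]expRK -lnM ?posrE ?expR_gt0 // ler_ln ?posrE.
Qed.

Section PartitionFunction.
Context {R : realType} (beta : R) (h : pt -> R) (N : nat) (Delta Delta' : R) (S : {fset pt}).
Implicit Types (tau : pt -> bool) (Om : pred (config S)) (t : R).

Local Notation w tau t := (weight beta h N Delta Delta' tau t).

Definition inner_spin (s : config S) : R := \sum_(x : S | inbox (N %/ 8) (val x)) spin (s x).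

Definition Zpart tau Om t : R := \sum_(s | Om s) w tau t s.

Definition spin_mean tau Om (x : S) t : R :=
  (\sum_(s | Om s) spin (s x) * w tau t s) / Zpart tau Om t.

Lemma weight_affine tau t s :
  w tau t s = w tau 0 s * expR (t * (beta * Delta * inner_spin s)).
Proof.
rewrite /weight -expRD !hamE; congr expR.
suff -> : field_energy h N Delta Delta' t s =
    field_energy h N Delta Delta' 0 s + t * Delta * inner_spin s by ring.
rewrite /field_energy /inner_spin mulr_sumr [X in _ = _ + X]big_mkcond -big_split /=.
by apply: eq_bigr => x _; rewrite /hfield; case: ifP => _; ring.
Qed.

Lemma Zpart_gt0 tau Om t : (exists s, Om s) -> 0 < Zpart tau Om t.
Proof.
case=> s0 Om_s0; rewrite /Zpart (bigD1 s0) //= ltr_pwDl ?expR_gt0 //.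
by rewrite sumr_ge0 // => s _; apply: expR_ge0.
Qed.

Lemma is_derive_weight tau s t :
  is_derive t 1 (fun u => w tau u s) (beta * Delta * inner_spin s * w tau t s).
Proof.
set k := beta * Delta * inner_spin s.
have d_lin : is_derive t 1 (fun u : R => u * k) k.
  by have := is_deriveM (is_derive_id t 1) (is_derive_cst k t 1); rewrite scaler0 add0r scaler1.
have d_w := is_deriveZ (w tau 0 s) (@is_derive1_comp R expR _ t _ _ (is_derive_expR _) d_lin).
under eq_fun do rewrite weight_affine.
rewrite (weight_affine tau t s); apply: is_derive_eq d_w _.
by rewrite -/k [RHS]mulrCA mulrC.
Qed.

Lemma is_derive_weighted_sum tau Om (f : config S -> R) t :
  is_derive t 1 (fun u => \sum_(s | Om s) f s * w tau u s)
    (\sum_(s | Om s) f s * (beta * Delta * inner_spin s * w tau t s)).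
Proof. by apply: is_derive_sum_seq => s _; apply: is_deriveZ; apply: is_derive_weight. Qed.

Lemma is_derive_Zpart tau Om t :
  is_derive t 1 (Zpart tau Om) (\sum_(s | Om s) beta * Delta * inner_spin s * w tau t s).
Proof. by apply: is_derive_sum_seq => s _; apply: is_derive_weight. Qed.

Lemma derivable_spin_mean tau Om x t : (exists s, Om s) -> derivable (spin_mean tau Om x) t 1.
Proof.
move=> Om_ne; apply: derivableM; first by case: (is_derive_weighted_sum tau Om (fun s => spin (s x)) t).
by apply: derivableV; [rewrite gt_eqF ?Zpart_gt0 | case: (is_derive_Zpart tau Om t)].
Qed.

Lemma is_derive_ln_Zpart tau Om t : (exists s, Om s) ->
  is_derive t 1 (fun u => ln (Zpart tau Om u))
    (beta * Delta * \sum_(x : S | inbox (N %/ 8) (val x)) spin_mean tau Om x t).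
Proof.
move=> Om_ne; have Z_gt0 := Zpart_gt0 tau t Om_ne.
have /is_derive_eq := is_derive1_comp (is_derive1_ln Z_gt0) (is_derive_Zpart tau Om t); apply.
rewrite /spin_mean -mulr_suml [RHS]mulrA [LHS]mulrC; congr (_ * _).
rewrite exchange_big /= mulr_sumr; apply: eq_bigr => s _.
rewrite /inner_spin mulr_sumr mulr_suml [RHS]mulr_sumr.
by apply: eq_bigr => x _; ring.
Qed.

Lemma spin_mean_le (taup taum : pt -> bool) (Omp Omm : pred (config S)) x t :
  0 < beta -> (forall v, v \in bdry S -> taum v ==> taup v) ->
  increasing Omp -> decreasing Omm -> (exists s, Omp s) -> (exists s, Omm s) ->
  spin_mean taum Omm x t <= spin_mean taup Omp x t.
Proof.
move=> beta_gt0 tau_le Omp_up Omm_down Omp_ne Omm_ne.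
have restrict Om tau (f : config S -> R) :
    \sum_(s | Om s) f s * w tau t s = \sum_s f s * (if Om s then w tau t s else 0).
  by rewrite big_mkcond; apply: eq_bigr => s _; case: (Om s); rewrite ?mulr0.
have w_ge0 Om tau s : 0 <= if Om s then w tau t s else 0 by case: ifP => // _; apply: expR_ge0.
have Z_restrict Om tau : Zpart tau Om t = \sum_s (if Om s then w tau t s else 0).
  by rewrite /Zpart big_mkcond.
rewrite /spin_mean !restrict !Z_restrict; apply: holley_spin_mean => //.
- by rewrite -Z_restrict Zpart_gt0.
- by rewrite -Z_restrict Zpart_gt0.
- exact: weight_ad_condition.
Qed.

Lemma mag_spin_mean tau Om t : (forall v, inbox (N %/ 32) v -> v \in S) ->
  mag beta h N Delta Delta' tau t Om = \sum_(x : S | inbox (N %/ 32) (val x)) spin_mean tau Om x t.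
Proof.
move=> box_sub; rewrite /mag (big_box_seq _ box_sub); apply: eq_bigr => x _.
by rewrite /spin_mean /Zpart /sigma_at valK.
Qed.

Lemma mu_Zpart tau Om t :
  mu beta h N Delta Delta' tau t Om = Zpart tau Om t / Zpart tau predT t.
Proof. by []. Qed.

Lemma Zpart_le_predT tau Om t : Zpart tau Om t <= Zpart tau predT t.
Proof.
rewrite /Zpart [X in X <= _]big_mkcond /=; apply: ler_sum => s _.
by case: (Om s) => //; apply: expR_ge0.
Qed.

Lemma Zpart_bdry_le (taup taum : pt -> bool) t :
  0 < beta -> (forall v, v \in bdry S -> taum v ==> taup v) ->
  let c := expR (4 * beta * \sum_(v <- bdry S) (spin (taup v) - spin (taum v))) in
  Zpart taup predT t <= Zpart taum predT t * c /\
  Zpart taum predT t <= Zpart taup predT t * c.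
Proof.
move=> beta_gt0 tau_le c; rewrite /Zpart !mulr_suml.
by split; apply: ler_sum => s _; case: (weight_bdry_le h N Delta Delta' t s beta_gt0 tau_le).
Qed.

End PartitionFunction.

Section Comparison.
Context {R : realType} (beta : R) (h : pt -> R) (N : nat) (Delta Delta' : R) (S : {fset pt}).
Variables (taup taum : pt -> bool) (Omp Omm : pred (config S)).
Hypotheses (beta_gt0 : 0 < beta) (tau_le : forall v, v \in bdry S -> taum v ==> taup v).
Hypotheses (Omp_up : increasing Omp) (Omm_down : decreasing Omm).
Hypotheses (Omp_ne : exists s, Omp s) (Omm_ne : exists s, Omm s).
Implicit Types (tau : pt -> bool) (Om : pred (config S)) (t : R).

Local Notation Z tau Om t := (@Zpart R beta h N Delta Delta' S tau Om t).
Local Notation mean_gap x t :=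
  (spin_mean beta h N Delta Delta' taup Omp x t - spin_mean beta h N Delta Delta' taum Omm x t).

Lemma continuous_mean_gap_sum (P : pred S) :
  continuous (fun t => \sum_(x : S | P x) mean_gap x t).
Proof.
apply: derivable_continuous => t; apply: derivable_sum_seq => x _.
by apply: derivableB; apply: derivable_spin_mean.
Qed.

Lemma mag_gap_eq (box_sub : forall v, inbox (N %/ 32) v -> v \in S) t :
  mag beta h N Delta Delta' taup t Omp - mag beta h N Delta Delta' taum t Omm =
  \sum_(x : S | inbox (N %/ 32) (val x)) mean_gap x t.
Proof. by rewrite !mag_spin_mean -?sumrB. Qed.

Lemma mean_gap_sum_le t :
  \sum_(x : S | inbox (N %/ 32) (val x)) mean_gap x t <=
  \sum_(x : S | inbox (N %/ 8) (val x)) mean_gap x t.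
Proof.
have box32_8 v : inbox (N %/ 32) v -> inbox (N %/ 8) v by apply/inbox_le/leq_div2l.
rewrite [X in _ <= X](bigID (fun x : S => inbox (N %/ 32) (val x))) /=.
rewrite [X in _ <= X + _](eq_bigl (fun x : S => inbox (N %/ 32) (val x))) => [|x]; last first.
  by rewrite andb_idl // => /box32_8.
by rewrite lerDl sumr_ge0 // => x _; rewrite subr_ge0 spin_mean_le.
Qed.

Lemma integral_mag_gap_le (Delta_gt0 : 0 < Delta)
    (box_sub : forall v, inbox (N %/ 32) v -> v \in S) :
  (Delta%:E * \int[@lebesgue_measure R]_(t in `[0%R, 1%R])
      (mag beta h N Delta Delta' taup t Omp - mag beta h N Delta Delta' taum t Omm)%:E
   <= (beta^-1 * (ln (Z taup Omp 1) - ln (Z taum Omm 1)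
                  - (ln (Z taup Omp 0) - ln (Z taum Omm 0))))%:E)%E.
Proof.
have bD_neq0 : beta * Delta != 0 by rewrite gt_eqF ?mulr_gt0.
pose F t := (beta * Delta)^-1 * (ln (Z taup Omp t) - ln (Z taum Omm t)).
have dF (t : R) : is_derive t 1 F (\sum_(x : S | inbox (N %/ 8) (val x)) mean_gap x t).
  have := is_deriveZ (beta * Delta)^-1 (is_deriveB
    (is_derive_ln_Zpart beta h N Delta Delta' taup t Omp_ne)
    (is_derive_ln_Zpart beta h N Delta Delta' taum t Omm_ne)).
  by move/is_derive_eq; apply; rewrite -mulrBr /GRing.scale /= mulrA mulVf ?mul1r ?sumrB.
have cont_mag : continuous (fun t =>
    mag beta h N Delta Delta' taup t Omp - mag beta h N Delta Delta' taum t Omm).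
  by under eq_fun do rewrite mag_gap_eq //; apply: continuous_mean_gap_sum.
have mag_le t : mag beta h N Delta Delta' taup t Omp - mag beta h N Delta Delta' taum t Omm <=
    \sum_(x : S | inbox (N %/ 8) (val x)) mean_gap x t by rewrite mag_gap_eq ?mean_gap_sum_le.
have := integral01_le_increment cont_mag (@continuous_mean_gap_sum _) mag_le dF.
have Delta_ge0 : (0 <= Delta%:E)%E by rewrite lee_fin ltW.
move/(lee_wpmul2l Delta_ge0)/le_trans; apply.
rewrite -EFinM lee_fin le_eqVlt; apply/predU1l.
by rewrite /F; field; rewrite !gt_eqF.
Qed.

Lemma ln_Zpart_gap_le :
  beta^-1 * (ln (Z taup Omp 1) - ln (Z taum Omm 1) - (ln (Z taup Omp 0) - ln (Z taum Omm 0))) <=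
  8 * \sum_(v <- bdry S) (spin (taup v) - spin (taum v))
  - beta^-1 * (ln (mu beta h N Delta Delta' taup 0 Omp) + ln (mu beta h N Delta Delta' taum 1 Omm)).
Proof.
set D := \sum_(v <- bdry S) _.
have predT_ne : exists s : config S, predT s by case: Omp_ne => s _; exists s.
have ln_mu tau Om t : (exists s, Om s) ->
    ln (mu beta h N Delta Delta' tau t Om) = ln (Z tau Om t) - ln (Z tau predT t).
  by move=> Om_ne'; rewrite mu_Zpart ln_div //; rewrite posrE Zpart_gt0.
have ln_Z_le tau Om t : (exists s, Om s) -> ln (Z tau Om t) <= ln (Z tau predT t).
  by move=> Om_ne'; rewrite ler_ln ?Zpart_le_predT //; rewrite posrE Zpart_gt0.
have ln_bdry t : ln (Z taup predT t) <= ln (Z taum predT t) + 4 * beta * D /\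
                 ln (Z taum predT t) <= ln (Z taup predT t) + 4 * beta * D.
  have [le_pm le_mp] := Zpart_bdry_le h N Delta Delta' t beta_gt0 tau_le.
  by split; apply: ler_ln_mulexpR; rewrite ?Zpart_gt0.
have [bdry_p1 _] := ln_bdry 1; have [_ bdry_m0] := ln_bdry 0.
have restrict_p1 := ln_Z_le taup Omp 1 Omp_ne; have restrict_m0 := ln_Z_le taum Omm 0 Omm_ne.
rewrite !ln_mu // -(ler_pM2l beta_gt0) [X in _ <= X]mulrBr !mulrA mulfV ?gt_eqF // !mul1r.
lra.
Qed.

End Comparison.

Theorem lemma3p4 (R : realType) (h : pt -> R) (beta : R) (n : nat)
  (Delta Delta' : R) (S : {fset pt}) (taup taum : pt -> bool)
  (Omp Omm : pred (config S)) :
  0 < beta -> (10 <= n)%N -> 0 < Delta -> 0 <= Delta' ->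
  (forall v, v \in S -> inbox (2 ^ n) v) ->
  (forall v, inbox (2 ^ n %/ 8) v -> v \in S) ->
  (forall v, v \in bdry S -> taum v ==> taup v) ->
  (exists s, Omp s) -> increasing Omp ->
  (exists s, Omm s) -> decreasing Omm ->
  (Delta%:E * \int[@lebesgue_measure R]_(t in `[0%R, 1%R])
       (mag beta h (2 ^ n) Delta Delta' taup t Omp
        - mag beta h (2 ^ n) Delta Delta' taum t Omm)%:E
   <= (8 * \sum_(v <- bdry S) (spin (taup v) - spin (taum v))
       - beta^-1 * (ln (mu beta h (2 ^ n) Delta Delta' taup 0 Omp)
                    + ln (mu beta h (2 ^ n) Delta Delta' taum 1 Omm)))%:E)%E.
Proof.
move=> beta_gt0 _ Delta_gt0 _ _ box_sub tau_le Omp_ne Omp_up Omm_ne Omm_down.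
have box32_sub v : inbox (2 ^ n %/ 32) v -> v \in S.
  by move=> v32; apply/box_sub/(inbox_le _ v32)/leq_div2l.
apply: le_trans (integral_mag_gap_le h Delta' beta_gt0 tau_le Omp_up Omm_down Omp_ne Omm_ne
  Delta_gt0 box32_sub) _.
by rewrite lee_fin; apply: ln_Zpart_gap_le.
Qed.
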